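(* An undirected graph $G=(V,E)$ is a Generalized Bartlett graph if and only if $G$ has a decomposable cover $\widetilde G=(V,\widetilde E)$ such that every triangle in $\widetilde E$ contains an edge from $E$; i.e., for any $u,v,w\in V$ with $\{u,v\},\{v,w\},\{u,w\}\in\widetilde E$, at least one of $\{u,v\},\{v,w\},\{u,w\}$ belongs to $E$.
   Context: A graph is decomposable if it has no induced cycle of length $\ge4$; a decomposable cover of $G=(V,E)$ is a decomposable graph $(V,\widetilde E)$ with $E\subset\widetilde E$. For an ordering $\sigma:V\to\{1,\dots,p\}$ ($p=|V|$), set $E^\sigma_0=E$ and for $i=1,\dots,p-2$, $E^\sigma_i=E^\sigma_{i-1}\cup\{\{u,v\}:u\ne v,\sigma(u)>i,\sigma(v)>i,\{u,\sigma^{-1}(i)\},\{v,\sigma^{-1}(i)\}\in E^\sigma_{i-1}\}$; $D^\sigma(E)=E^\sigma_{p-2}$. $G$ is a Generalized Bartlett graph if there exists an ordering $\sigma$ such that there are no $u,v,w\in V$ with $\{u,v\},\{v,w\},\{u,w\}\notin E$ but $\{u,v\},\{v,w\},\{u,w\}\in D^\sigma(E)$. *)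

From mathcomp Require Import all_boot.
Set Implicit Arguments. Unset Strict Implicit. Unset Printing Implicit Defensive.

(* A simple graph on a finite vertex set V is a symmetric irreflexive
   relation e : rel V; {u,v} is an edge iff e u v. *)

Definition induced_cycle (V : finType) (e : rel V) (n : nat) (f : 'I_n -> V) :=
  injective f /\
  forall i j : 'I_n,
    e (f i) (f j) = (val j == (val i).+1 %% n) || (val i == (val j).+1 %% n).

Definition decomposable (V : finType) (e : rel V) :=
  forall (n : nat) (f : 'I_n -> V), 4 <= n -> ~ induced_cycle e f.

(* An ordering sigma : V -> {0,..,p-1} (0-based, injective hence bijective).
   Paper's step i (1-based, eliminating sigma^{-1}(i)) is step k = i-1 here:
   add {u,v}, u <> v, both of rank > k, both adjacent to the vertex of rank k. *)
Definition elim_step (V : finType) (sigma : V -> 'I_#|V|) (k : nat) (e : rel V)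
  : rel V :=
  fun u v => e u v ||
    [&& u != v, k < sigma u, k < sigma v &
        [exists w, [&& val (sigma w) == k, e u w & e v w]]].

(* D^sigma(E) = E^sigma_{p-2}: apply steps k = 0, ..., p-3. *)
Definition Dsigma (V : finType) (sigma : V -> 'I_#|V|) (e : rel V) : rel V :=
  iteri (#|V| - 2) (elim_step sigma) e.

Definition generalized_bartlett (V : finType) (e : rel V) :=
  exists sigma : V -> 'I_#|V|, injective sigma /\
    forall u v w : V,
      ~ ([&& ~~ e u v, ~~ e v w & ~~ e u w] /\
         [&& Dsigma sigma e u v, Dsigma sigma e v w & Dsigma sigma e u w]).

From mathcomp Require Import all_boot zify.
Set Implicit Arguments. Unset Strict Implicit. Unset Printing Implicit Defensive.

(* If sigma witnesses the Generalized Bartlett property, D^sigma(E) itself is the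
   required cover: on an induced cycle of length >= 4, the vertex of least rank is
   eliminated while both its cycle-neighbours are still present, so the elimination
   game joins them and the cycle is not induced in D^sigma(E).  Conversely, a
   decomposable cover Et has a perfect elimination ordering (Dirac: in a chordal
   graph minimal separators are cliques, so there is always a simplicial vertex);
   eliminating E along that ordering only adds edges of Et, so every triangle of
   D^sigma(E) is a triangle of Et and contains an edge of E. *)

Section EliminationGame.

Variables (V : finType) (sigma : V -> 'I_#|V|).

Lemma elim_step_sym k (g : rel V) : symmetric g -> symmetric (elim_step sigma k g).
Proof.
move=> gsym u v; rewrite /elim_step gsym [u == v]eq_sym; congr (_ || (_ && _)).
rewrite andbCA; congr (_ && (_ && _)); apply: eq_existsb => w.
by rewrite [g u w && _]andbC.
Qed.

Lemma elim_step_irr k (g : rel V) : irreflexive g -> irreflexive (elim_step sigma k g).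
Proof. by move=> girr u; rewrite /elim_step girr eqxx. Qed.

Lemma elim_step_ext k (g : rel V) : subrel g (elim_step sigma k g).
Proof. by move=> u v; rewrite /elim_step => ->. Qed.

Variable e : rel V.
Local Notation fill m := (iteri m (elim_step sigma) e).

Lemma fill_sym m : symmetric e -> symmetric (fill m).
Proof. by move=> esym; elim: m => //= m; apply: elim_step_sym. Qed.

Lemma fill_irr m : irreflexive e -> irreflexive (fill m).
Proof. by move=> eirr; elim: m => //= m; apply: elim_step_irr. Qed.

Lemma fill_mono m m' : m <= m' -> subrel (fill m) (fill m').
Proof.
move/subnK <-; elim: (m' - m) => //= d IH u v /IH; exact: elim_step_ext.
Qed.

Lemma fill_ext m : subrel e (fill m).
Proof. exact: (@fill_mono 0). Qed.

(* Edges at [u] are only ever added by the steps [k < sigma u]. *)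
Lemma fill_settled m u v : fill m u v -> fill (minn m (sigma u)) u v.
Proof.
elim: m => [|m IH]; first by rewrite min0n.
case/orP=> [/IH | fresh].
  by apply: fill_mono; rewrite leq_min geq_minr andbT leqW ?geq_minl.
have ltmu : m < sigma u by case/and4P: fresh.
by rewrite (minn_idPl ltmu) /= /elim_step fresh orbT.
Qed.

End EliminationGame.

Lemma val_iter_ordS n (i : 'I_n) k : val (iter k (@ordS n) i) = (i + k) %% n.
Proof.
elim: k => [|k IH] /=; first by rewrite addn0 modn_small.
by rewrite IH -addn1 modnDml -addnA addn1.
Qed.

Lemma iter_ordS_neq n (i : 'I_n) k : 0 < k < n -> iter k (@ordS n) i != i.
Proof.
case/andP=> k_gt0 k_lt_n; rewrite -val_eqE val_iter_ordS.
apply: contraTneq k_gt0 => ik_i.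
have : i + k == i + 0 %[mod n] by rewrite ik_i addn0 modn_small.
by rewrite eqn_modDl mod0n modn_small // => /eqP ->.
Qed.

Section InducedCycle.

Variables (V : finType) (e : rel V) (n : nat) (f : 'I_n -> V).
Hypothesis cyc : induced_cycle e f.

Lemma induced_cycleE i j : e (f i) (f j) = (j == ordS i) || (i == ordS j).
Proof. by case: cyc => _ ->; rewrite -!val_eqE. Qed.

Lemma induced_cycle_nbrs i : 4 <= n ->
  exists j1 j2, [/\ e (f i) (f j1), e (f i) (f j2), ~~ e (f j1) (f j2)
                  & uniq [:: i; j1; j2]].
Proof.
move=> n_ge4; have n_gt k : k < 4 -> k < n by move/leq_trans; apply.
exists (ordS i), (ord_pred i); rewrite !induced_cycleE ord_predK !eqxx orbT.
have ne k : 0 < k < 4 -> iter k (@ordS n) i != i.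
  by case/andP=> k_gt0 /n_gt k_lt_n; apply: iter_ordS_neq; rewrite k_gt0.
have pred_neq j : (ord_pred i != j) = (i != ordS j).
  by rewrite -(inj_eq (@ordS_inj n)) ord_predK.
have [s1 s2 s3] : [/\ ordS i != i, ordS (ordS i) != i & ordS (ordS (ordS i)) != i].
  by split; [exact: (ne 1) | exact: (ne 2) | exact: (ne 3)].
rewrite /= !inE !negb_or andbT pred_neq ![_ == ord_pred i]eq_sym !pred_neq.
by rewrite ![i == _]eq_sym s1 s2 s3.
Qed.

End InducedCycle.

Lemma Dsigma_decomposable (V : finType) (sigma : V -> 'I_#|V|) (e : rel V) :
  injective sigma -> symmetric e -> irreflexive e -> decomposable (Dsigma sigma e).
Proof.
move=> sigma_inj esym eirr n f n_ge4 cyc; have [f_inj _] := cyc.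
have n_gt0 : 0 < n by apply: leq_trans n_ge4.
case: (arg_minnP (fun i => sigma (f i) : nat) (isT : predT (Ordinal n_gt0))).
move=> i _ i_min; set k : nat := sigma (f i) in i_min.
have [j1 [j2 [e_ij1 e_ij2 /negP ne_j12]]] := induced_cycle_nbrs cyc i n_ge4.
rewrite /= !inE negb_or andbT => /andP[/andP[i_j1 i_j2] j1_j2].
have rank_gt j : i != j -> k < sigma (f j).
  move=> i_j; rewrite ltn_neqAle i_min // andbT.
  by apply: contra i_j => /eqP/val_inj/sigma_inj/f_inj->.
have fj1_fj2 : f j1 != f j2 by rewrite (inj_eq f_inj).
(* Two distinct ranks lie above [k], so step [k] is among the [#|V| - 2] steps. *)
have k_lt : k.+1 <= #|V| - 2.
  have := rank_gt _ i_j1; have := rank_gt _ i_j2.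
  have : (sigma (f j1) : nat) != sigma (f j2).
    by apply: contra fj1_fj2 => /eqP/val_inj/sigma_inj->.
  have := ltn_ord (sigma (f j1)); have := ltn_ord (sigma (f j2)); lia.
have settled j : Dsigma sigma e (f i) (f j) -> iteri k (elim_step sigma) e (f j) (f i).
  by move/fill_settled; rewrite (minn_idPr (ltnW k_lt)) fill_sym.
have : iteri k.+1 (elim_step sigma) e (f j1) (f j2).
  rewrite /= /elim_step fj1_fj2 !rank_gt //=; apply/orP; right.
  by apply/existsP; exists (f i); rewrite eqxx !settled.
by move/(fill_mono k_lt).
Qed.

Lemma has_split_last (T : Type) (P : pred T) (s : seq T) :
  has P s -> exists s1 y s2, [/\ s = s1 ++ y :: s2, P y & ~~ has P s2].
Proof.
elim/last_ind: s => [//|s z IH]; rewrite -cats1 has_cat /= orbF.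
have [Pz _|nPz] := boolP (P z); first by exists s, z, [::].
rewrite orbF => /IH[s1 [y [s2 [-> Py nP2]]]].
by exists s1, y, (s2 ++ [:: z]); rewrite -catA has_cat /= (negbTE nPz) !orbF.
Qed.

Section ChordlessPaths.

Variables (V : finType) (e : rel V).

Fixpoint chordless (s : seq V) : bool :=
  if s is x :: t then ~~ has (e x) (behead t) && chordless t else true.

Lemma chordless_subpath x s : path e x s ->
  exists t, [/\ subseq t s, path e x t, last x t = last x s & chordless (x :: t)].
Proof.
have [m] := ubnP (size s); elim: m x s => [//|m IH] x [_ _|y0 s]; first by exists [::].
rewrite ltnS => size_s /[dup] /andP[e_xy0 _] xs.
have /has_split_last[s1 [y [s2 [def_s e_xy nhas2]]]] : has (e x) (y0 :: s).
  by rewrite /= e_xy0.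
rewrite def_s cat_path /= in xs; case/and3P: xs => _ _ ys2.
have size_s2 : size s2 < m.
  by apply: leq_trans size_s; rewrite def_s size_cat /= addnS ltnS leq_addl.
have [t [sub_t yt last_t chord_t]] := IH y s2 size_s2 ys2.
exists (y :: t); split.
- by rewrite def_s; apply: subseq_trans (suffix_subseq s1 _); rewrite /= eqxx.
- by rewrite /= e_xy.
- by rewrite def_s last_cat /= last_t.
apply/andP; split=> //=; apply: contra nhas2 => /hasP[w /(mem_subseq sub_t) w_s2 e_xw].
by apply/hasP; exists w.
Qed.

Lemma chordless_path_adj x0 x s : path e x s -> chordless (x :: s) ->
  forall i j, i < j <= size s ->
    e (nth x0 (x :: s) i) (nth x0 (x :: s) j) = (j == i.+1).
Proof.
elim: s x => [|y s IH] x /=; first by move=> _ _ i [|j] //; rewrite ltn0 andbF.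
case/andP=> e_xy ys /andP[nhas chord_ys] [|i] [|j] //=.
  case: j => [|j] //=; rewrite ltnS => j_lt; apply/negbTE.
  by apply: contra nhas => e_xw; apply/hasP; exists (nth x0 s j); rewrite // mem_nth.
by rewrite ltnS => ij; rewrite IH.
Qed.

End ChordlessPaths.

Lemma modS_ord n (i : 'I_n) : i.+1 %% n = if i.+1 == n then 0 else i.+1.
Proof.
case: eqP => [-> | /eqP ne]; first exact: modnn.
by rewrite modn_small // ltn_neqAle ne ltn_ord.
Qed.

Lemma nth_induced_cycle (V : finType) (e : rel V) (x0 : V) (c : seq V) :
  symmetric e -> irreflexive e -> uniq c -> 1 < size c ->
  (forall i j, i < j < size c ->
     e (nth x0 c i) (nth x0 c j) = (j == i.+1) || (i == 0) && (j == (size c).-1)) ->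
  induced_cycle e (fun i : 'I_(size c) => nth x0 c i).
Proof.
move=> esym eirr c_uniq c_gt1 c_adj; split.
  by move=> i j /eqP; rewrite nth_uniq // => /eqP/val_inj.
move=> i j; rewrite !modS_ord; case: i j => [i i_lt] [j j_lt] /=.
case: (ltngtP i j) => [ij|ji|<-]; last by rewrite eirr; case: ifP; lia.
  by rewrite c_adj ?ij //; do 2 case: ifP; lia.
by rewrite esym c_adj ?ji //; do 2 case: ifP; lia.
Qed.

Lemma hub_cycle_adj (V : finType) (e : rel V) a y t z :
  path e y (rcons t z) -> chordless e (y :: rcons t z) ->
  e a y -> e a z -> {in t, forall w, ~~ e a w} ->
  let c := a :: y :: rcons t z in
  forall i j, i < j < size c ->
    e (nth a c i) (nth a c j) = (j == i.+1) || (i == 0) && (j == (size c).-1).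
Proof.
move=> yt chord_t e_ay e_az t_far c [|i] [|j] //=; rewrite size_rcons ?ltnS => ij.
  case: j ij => [|j] ij /=; first by rewrite e_ay.
  rewrite nth_rcons; case: ltnP => [j_lt|j_ge].
    by rewrite (negbTE (t_far _ (mem_nth a j_lt))); lia.
  by rewrite (_ : j = size t) ?eqxx ?e_az //; lia.
by rewrite orbF (chordless_path_adj a yt chord_t) ?size_rcons.
Qed.

Section Chordal.

Variables (V : finType) (e : rel V).
Hypotheses (esym : symmetric e) (eirr : irreflexive e) (chordal : decomposable e).

Lemma hub_path_chord a y z p :
  e a y -> e a z -> y != z -> uniq p -> all (fun w => (w != a) && ~~ e a w) p ->
  path e y (rcons p z) -> e y z.
Proof.
move=> e_ay e_az yz p_uniq /allP p_far yz_path; apply/negPn/negP => nyz.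
have adj_notin w : e a w -> (w \notin p) && (a != w).
  move=> e_aw; apply/andP; split; last by apply: contraTneq e_aw => <-; rewrite eirr.
  by apply: contraTN e_aw => /p_far/andP[].
have [t [sub_t yt last_t chord_t]] := chordless_subpath yz_path.
rewrite last_rcons in last_t.
have c_uniq : uniq (a :: y :: t).
  apply: subseq_uniq (_ : subseq _ (a :: y :: rcons p z)) _; first by rewrite /= !eqxx.
  have /andP[yp ay] := adj_notin y e_ay; have /andP[zp az] := adj_notin z e_az.
  rewrite /= !inE !mem_rcons !inE rcons_uniq (negbTE ay) (negbTE az) (negbTE yz).
  by rewrite (negbTE yp) zp p_uniq !andbT; apply/negP => /p_far; rewrite eqxx.
case/lastP: t => [|t z'] in sub_t yt last_t chord_t c_uniq *.
  by rewrite -last_t eqxx in yz.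
rewrite last_rcons in last_t; subst z'.
have t_far w : w \in t -> ~~ e a w.
  move: c_uniq => /= /and3P[_ _]; rewrite rcons_uniq => /andP[zt _] wt.
  have : w \in rcons p z by apply: (mem_subseq sub_t); rewrite mem_rcons inE wt orbT.
  rewrite mem_rcons inE => /orP[/eqP wz|/p_far/andP[] //]; by rewrite -wz wt in zt.
case: t => [|w t] in sub_t yt chord_t c_uniq t_far *.
  by rewrite /= andbT in yt; rewrite yt in nyz.
have c_ge4 : 4 <= size (a :: y :: rcons (w :: t) z) by rewrite /= size_rcons.
have c_adj := hub_cycle_adj yt chord_t e_ay e_az t_far.
exact: chordal _ _ c_ge4 (nth_induced_cycle esym eirr c_uniq (ltnW (ltnW c_ge4)) c_adj).
Qed.

Definition simplicial (S : {set V}) x :=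
  {in S &, forall y z, e x y -> e x z -> y != z -> e y z}.

Lemma simplicialS (S T : {set V}) x : T \subset S -> simplicial S x -> simplicial T x.
Proof. by move=> /subsetP TS Sx y z /TS yS /TS zS; apply: Sx. Qed.

(* [boundary S a u] separates the component [comp S a u] of [u], among the vertices
   of [S] not adjacent to [a], from [a]; it is a minimal such separator, hence a clique. *)
Section Component.

Variables (S : {set V}) (a u : V).

Definition far := [set y in S | (y != a) && ~~ e a y].
Definition far_rel := [rel y z | [&& y \in far, z \in far & e y z]].
Definition comp := [set y | connect far_rel u y].
Definition boundary := [set y in S :\: comp | [exists c in comp, e y c]].

Hypothesis u_far : u \in far.

Lemma comp_far : {subset comp <= far}.
Proof.
move=> y; rewrite inE => /connectP[p up ->]; case/lastP: p up => //= p z.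
by rewrite rcons_path last_rcons => /andP[_ /and3P[]].
Qed.

Lemma comp_closed c y : c \in comp -> y \in far -> e c y -> y \in comp.
Proof.
move=> cC yM e_cy; rewrite inE; apply: (connect_trans (_ : connect far_rel u c)).
  by rewrite inE in cC.
by apply: connect1; rewrite /= yM e_cy comp_far.
Qed.

Lemma boundary_adj y : y \in boundary -> e a y.
Proof.
rewrite !inE => /andP[/andP[yC yS] /existsP[c /andP[cC e_yc]]].
have := comp_far cC; rewrite inE => /and3P[_ ca nac].
apply: contraNT yC => nay; suff: y \in comp by rewrite inE.
apply: (comp_closed cC); last by rewrite esym.
by rewrite inE yS nay andbT /=; apply: contraNneq nac => <-.
Qed.

Lemma comp_nbr c y : c \in comp -> y \in S -> e c y -> y \in comp :|: boundary.
Proof.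
move=> cC yS e_cy; rewrite in_setU; have [//|yC /=] := boolP (y \in comp).
by rewrite inE in_setD yC yS; apply/existsP; exists c; rewrite cC esym.
Qed.

Lemma comp_boundary_proper : a \in S -> comp :|: boundary \proper S.
Proof.
move=> aS; apply/properP; split.
  apply/subsetP => y; rewrite in_setU => /orP[/comp_far|]; rewrite inE.
    by case/andP.
  by rewrite in_setD => /andP[/andP[]].
exists a => //; rewrite in_setU negb_or; apply/andP; split.
  by apply/negP => /comp_far; rewrite inE eqxx /= andbF.
by apply/negP => /boundary_adj; rewrite eirr.
Qed.

Lemma boundary_clique y z : y \in boundary -> z \in boundary -> y != z -> e y z.
Proof.
have comp_nbr_of w : w \in boundary -> exists2 c, c \in comp & e w c.
  by rewrite inE => /andP[_ /existsP[c /andP[cC e_wc]]]; exists c.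
move=> /[dup] yB /comp_nbr_of[c1 c1C e_yc1] /[dup] zB /comp_nbr_of[c2 c2C e_zc2] yz.
have far_rel_sym : symmetric far_rel by move=> p q; rewrite /= esym andbCA andbA.
have : connect far_rel c1 c2.
  rewrite !inE in c1C c2C; apply: connect_trans c2C.
  by rewrite (sym_connect_sym far_rel_sym).
move=> /connectP[p c1p c2_last]; move: e_zc2; rewrite c2_last.
case: (shortenP c1p) => p' c1p' p'_uniq _ e_zc2.
have p'_comp : {subset c1 :: p' <= comp}.
  move=> w /(path_connect c1p') c1w; move: c1C; rewrite !inE => uc1.
  exact: connect_trans uc1 c1w.
apply: (hub_path_chord (boundary_adj yB) (boundary_adj zB) yz p'_uniq).
  by apply/allP => w /p'_comp /comp_far; rewrite inE => /andP[].
rewrite rcons_path /= e_yc1 esym e_zc2 andbT.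
by apply: sub_path c1p' => w w' /and3P[].
Qed.

End Component.

Lemma simplicial_exists_nonadj (S : {set V}) a u : a \in S -> u \in S -> u != a -> ~~ e a u ->
  exists2 x, x \in S & [/\ x != a, ~~ e a x & simplicial S x].
Proof.
have [m] := ubnP #|S|; elim: m S a u => [//|m IH] S a u.
rewrite ltnS => S_le aS uS ua nau.
have u_far : u \in far S a by rewrite inE uS ua.
pose W := comp S a u :|: boundary S a u.
have W_lt : #|W| < m by apply: leq_trans S_le; apply: proper_card; apply: comp_boundary_proper.
have comp_simplicial c : c \in comp S a u -> simplicial W c ->
    exists2 x, x \in S & [/\ x != a, ~~ e a x & simplicial S x].
  move=> cC Wc; have := comp_far u_far cC; rewrite inE => /and3P[cS ca nac].
  exists c => //; split=> // y z yS zS e_cy e_cz.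
  by apply: Wc => //; [exact: comp_nbr cC yS e_cy | exact: comp_nbr cC zS e_cz].
have uW : u \in comp S a u by rewrite inE connect0.
have [/existsP[p /existsP[q /and4P[pW qW qp npq]]]|] :=
  boolP [exists p, exists q, [&& p \in W, q \in W, q != p & ~~ e p q]]; last first.
  move=> W_clique; apply: (comp_simplicial u uW) => y z yW zW _ _ yz.
  apply: contraNT W_clique => nyz; apply/existsP; exists y; apply/existsP; exists z.
  by rewrite yW zW eq_sym yz.
(* Two simplicial vertices of [W] that are nonadjacent cannot both lie in the clique
   [boundary S a u]. *)
have W_split x : x \in W -> x \notin comp S a u -> x \in boundary S a u.
  by rewrite in_setU => /orP[->|].
have [x1 x1W [x1p npx1 Wx1]] := IH W p q W_lt pW qW qp npq.
have [x1C|x1C] := boolP (x1 \in comp S a u); first exact: comp_simplicial x1C Wx1.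
have nx1p : ~~ e x1 p by rewrite esym.
have px1 : p != x1 by rewrite eq_sym.
have [x2 x2W [x2x1 nx1x2 Wx2]] := IH W x1 p W_lt x1W pW px1 nx1p.
have [x2C|x2C] := boolP (x2 \in comp S a u); first exact: comp_simplicial x2C Wx2.
have e_x1x2 := boundary_clique u_far (W_split _ x1W x1C) (W_split _ x2W x2C).
by rewrite e_x1x2 // eq_sym in nx1x2.
Qed.

Lemma simplicial_exists (S : {set V}) : S != set0 -> exists2 x, x \in S & simplicial S x.
Proof.
case/set0Pn=> a aS.
have [/existsP[p /existsP[q /and4P[pS qS qp npq]]]|S_clique] :=
  boolP [exists p, exists q, [&& p \in S, q \in S, q != p & ~~ e p q]].
  by have [x xS [_ _ Sx]] := simplicial_exists_nonadj pS qS qp npq; exists x.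
exists a => // y z yS zS _ _ yz; apply: contraNT S_clique => nyz.
by apply/existsP; exists y; apply/existsP; exists z; rewrite yS zS eq_sym yz.
Qed.

Lemma perfect_elimination_seq (S : {set V}) : exists s, [/\ uniq s, s =i S &
  {in s, forall x, simplicial [set y in s | index x s <= index y s] x}].
Proof.
have [m] := ubnP #|S|; elim: m S => [//|m IH] S; rewrite ltnS => S_le.
have [->|S_n0] := eqVneq S set0; first by exists [::]; split=> // y; rewrite inE.
have [x xS Sx] := simplicial_exists S_n0.
have [|s [s_uniq s_S s_peo]] := IH (S :\ x).
  by apply: leq_trans S_le; rewrite (cardsD1 x S) xS.
exists (x :: s); split.
- by rewrite /= s_uniq s_S !inE eqxx.
- by move=> y; rewrite inE s_S !inE; case: eqVneq => [->|].
move=> y; rewrite inE => /predU1P[->|ys].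
  apply: simplicialS Sx; apply/subsetP => z; rewrite !inE => /andP[].
  by case/predU1P => [->|]; rewrite // s_S => /setD1P[].
have xy : x != y by apply: contraTneq ys => <-; rewrite s_S !inE eqxx.
apply: simplicialS (s_peo y ys); apply/subsetP => z; rewrite !inE /= (negbTE xy).
case: eqVneq => [->|xz]; first by rewrite ltn0 andbF.
by rewrite ltnS.
Qed.

Lemma perfect_elimination_ordering : exists sigma : V -> 'I_#|V|,
  injective sigma /\ forall x, simplicial [set y | sigma x <= sigma y] x.
Proof.
have [s [s_uniq s_V s_peo]] := perfect_elimination_seq [set: V].
have s_all x : x \in s by rewrite s_V inE.
have s_size : size s = #|V|.
  by rewrite -(card_uniqP s_uniq); apply: eq_card => x; rewrite s_all.
have index_lt x : index x s < #|V| by rewrite -s_size index_mem.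
exists (fun x => Ordinal (index_lt x)); split.
  by move=> x y /(congr1 val) /= /(congr1 (nth x s)); rewrite !nth_index.
move=> x; apply: simplicialS (s_peo x (s_all x)); apply/subsetP => y.
by rewrite !inE s_all.
Qed.

Lemma fill_subrel (sigma : V -> 'I_#|V|) (E : rel V) k :
  (forall x, simplicial [set y | sigma x <= sigma y] x) -> subrel E e ->
  subrel (iteri k (elim_step sigma) E) e.
Proof.
move=> sigma_peo Ee; elim: k => //= k IH u v /orP[/IH //|].
case/and4P=> uv ku kv /existsP[w /and3P[/eqP wk e_uw e_vw]].
apply: (sigma_peo w) => //; rewrite ?inE ?wk ?(ltnW ku) ?(ltnW kv) // esym; exact: IH.
Qed.

End Chordal.

Theorem lemma2 (V : finType) (E : rel V)
    (Esym : symmetric E) (Eirr : irreflexive E) :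
  generalized_bartlett E <->
  exists Et : rel V,
    [/\ symmetric Et, irreflexive Et, subrel E Et, decomposable Et &
        forall u v w : V, Et u v -> Et v w -> Et u w ->
          [|| E u v, E v w | E u w]].
Proof.
split.
  case=> sigma [sigma_inj no_new_triangle]; exists (Dsigma sigma E); split.
  - exact: fill_sym.
  - exact: fill_irr.
  - exact: fill_ext.
  - exact: Dsigma_decomposable.
  move=> u v w uv vw uw; apply/negPn/negP => nE; apply: (no_new_triangle u v w).
  by split; [move: nE; rewrite !negb_or | apply/and3P].
case=> Et [Et_sym Et_irr E_Et Et_chordal Et_triangle].
have [sigma [sigma_inj sigma_peo]] := perfect_elimination_ordering Et_sym Et_irr Et_chordal.
exists sigma; split=> // u v w [/and3P[nuv nvw nuw] /and3P[uv vw uw]].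
have D_Et := fill_subrel Et_sym (k := #|V| - 2) sigma_peo E_Et.
move: (Et_triangle u v w (D_Et _ _ uv) (D_Et _ _ vw) (D_Et _ _ uw)).
by rewrite (negbTE nuv) (negbTE nvw) (negbTE nuw).
Qed.
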